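(* There is an absolute constant $C$ such that for every integer $n\ge 2$ and every $(x_1,\dots,x_n)\in A_n$, $$S_n(x_1,\dots,x_n)\le n^3+Cn^2 .$$
   Context: For an integer $n\ge 2$, $A_n$ is the set of integer vectors $(x_1,\dots,x_n)\in\mathbb{Z}^n$ such that $n\ge x_1\ge x_2\ge\cdots\ge x_n\ge 0$, $\sum_{i=1}^k x_i\le 2n+6k-16$ for every $k\in\{1,\dots,n\}$, and $\sum_{i=1}^n x_i\le 6n-12$. For an integer $m\ge 2$, $S_m:\mathbb{R}^m\to\mathbb{R}$ is defined by $S_m(x_1,\dots,x_m)=\sum_{i=1}^{m-1}\sum_{j=i+1}^{m} x_i x_j^2$. *)

From mathcomp Require Import all_boot all_order all_algebra.
Set Implicit Arguments. Unset Strict Implicit. Unset Printing Implicit Defensive.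
Import Order.TTheory GRing.Theory Num.Theory.
Local Open Scope ring_scope.

(* Vectors (x_1,...,x_n) are functions x : 'I_n -> int, with x_{i+1} = x i
   (0-based indexing). *)

Definition in_A (n : nat) (x : 'I_n -> int) : Prop :=
  (forall i : 'I_n, x i <= n%:Z) /\
  (forall i j : 'I_n, (i <= j)%N -> x j <= x i) /\
  (forall i : 'I_n, 0 <= x i) /\
  (forall k : nat, (1 <= k <= n)%N ->
     \sum_(i < n | (i < k)%N) x i <= 2 * n%:Z + 6 * k%:Z - 16) /\
  \sum_(i < n) x i <= 6 * n%:Z - 12.

Definition S (R : pzRingType) (m : nat) (x : 'I_m -> R) : R :=
  \sum_(i < m) \sum_(j < m | (i < j)%N) x i * x j ^+ 2.

From mathcomp Require Import all_boot all_order all_algebra.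
From mathcomp Require Import zify ring.
Set Implicit Arguments. Unset Strict Implicit. Unset Printing Implicit Defensive.
Import Order.TTheory GRing.Theory Num.Theory.
Local Open Scope ring_scope.

(* Extend x by zeros to a nonincreasing sequence y over nat and
   let a_k = y_0 + ... + y_(k-1) be its prefix sums.  Exchanging the double sum
   gives S(x) = sum_(j < n) y_j^2 a_j, so the sum is built up by steps
   a -> a + y_k adding y_k^2 a_k.  Writing N = n, we track the potential
       8 * sum_(j < k) y_j^2 a_j + 16 N y_(k-1) slack(k, a_k)
         <= phi(a_k) + 384 N a_k,
   where phi(a) = a^3 while a < 2N and phi(a) = 8N^3 + 288N^2 afterwards, and
   slack(k, a) = 6k + 2N - max(a, 2N) >= 0 measures the room left by the
   prefix constraint a_k <= 2N + 6k - 16.  Below 2N the increment 8 y_k^2 a_k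
   is paid by the growth of the cube (since 2 y_k <= a_k); the single step
   crossing 2N is paid by the jump of phi; above 2N it is paid by the decrease
   of the slack term. *)

Lemma cube_increment (a x : int) :
  0 <= x -> 2 * x <= a -> 8 * x ^+ 2 * a <= (a + x) ^+ 3 - a ^+ 3.
Proof.
move=> x_ge0 le2xa.
have gap_ge0 : 0 <= x * (a * (3 * a - 5 * x) + x ^+ 2).
  by apply: mulr_ge0 => //; apply: addr_ge0; [apply: mulr_ge0; lia | exact: sqr_ge0].
have -> : (a + x) ^+ 3 - a ^+ 3 = 8 * x ^+ 2 * a + x * (a * (3 * a - 5 * x) + x ^+ 2)
  by ring.
lia.
Qed.

(* The one step at which the prefix sum crosses 2N: its new term fits into the
   jump of phi up to 8N^3 + 288N^2. *)
Lemma cube_crossing (N k a x : int) :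
  2 <= N -> 2 <= k -> 0 <= x -> 0 <= a -> a < 2 * N ->
  k * x <= a -> a + x <= 2 * N + 6 * k - 10 ->
  a ^+ 3 + 8 * x ^+ 2 * a <= 8 * N ^+ 3 + 288 * N ^+ 2.
Proof.
move=> N_ge2 k_ge2 x_ge0 a_ge0 a_lt hkx hax.
have le2xa : 2 * x <= a by have := ler_wpM2r x_ge0 k_ge2; lia.
have [k2|k_ge3] : k = 2 \/ 3 <= k by lia.
  subst k; have := cube_increment x_ge0 le2xa.
  have : (a + x) ^+ 3 <= (2 * N + 2) ^+ 3 by apply: lerXn2r; rewrite ?nnegrE; lia.
  have : 0 <= N ^+ 2 * (N - 2) by apply: mulr_ge0; [exact: sqr_ge0 | lia].
  have : 0 <= N * (N - 2) by apply: mulr_ge0; lia.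
  lia.
have le3xa : 3 * x <= a by have := ler_wpM2r x_ge0 k_ge3; lia.
have : 0 <= (2 * N - a) * ((2 * N - a) * (2 * N + a)).
  by apply: mulr_ge0; [lia | apply: mulr_ge0; lia].
have : 0 <= (2 * N - a) * a * (2 * N - a) by apply: mulr_ge0; [apply: mulr_ge0|]; lia.
have : 0 <= a * (2 * N - a) * (a - 3 * x) by apply: mulr_ge0; [apply: mulr_ge0|]; lia.
have : 0 <= a * x * (2 * N - a - x + 6 * k + 6) by apply: mulr_ge0; [apply: mulr_ge0|]; lia.
have : 0 <= a * (4 * a - 3 * (k + 1) * x).
  by apply: mulr_ge0 => //; have := ler_wpM2r x_ge0 k_ge3; lia.
have : 0 <= (2 * N - a) * (2 * N + a) by apply: mulr_ge0; lia.
have : 0 <= x ^+ 2 * a by apply: mulr_ge0 => //; exact: sqr_ge0.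
lia.
Qed.

Definition phi (N a : int) : int :=
  if 2 * N <= a then 8 * N ^+ 3 + 288 * N ^+ 2 else a ^+ 3.

Definition slack (N : int) (k : nat) (a : int) : int :=
  6 * k%:Z + 2 * N - (if 2 * N <= a then a else 2 * N).

(* One step of the potential argument: the prefix sum a = a_k grows by the
   new term x = y_k, whose predecessor is p = y_(k-1); the hypotheses are what
   monotonicity and the constraints of A_n give at indices k and k + 1. *)
Section PotentialStep.

Variables (N a x p : int) (k : nat).
Hypotheses (N_ge2 : 2 <= N) (k_ge2 : (2 <= k)%N) (x_ge0 : 0 <= x) (x_le_p : x <= p).
Hypothesis (kx_le_a : k%:Z * x <= a).
Hypotheses (a_le : a <= 2 * N + 6 * k%:Z - 16) (ax_le : a + x <= 2 * N + 6 * k%:Z - 10).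
Hypothesis (ax_le_total : a + x <= 6 * N - 12).

Let k_ge2_int : 2 <= k%:Z.
Proof. by []. Qed.

Let a_ge0 : 0 <= a.
Proof. by have := ler_wpM2r x_ge0 k_ge2_int; lia. Qed.

Let p_ge0 : 0 <= p.
Proof. exact: le_trans x_le_p. Qed.

Lemma step_above : 2 * N <= a ->
  8 * x ^+ 2 * a + 16 * N * (x * (6 * k.+1%:Z + 2 * N - (a + x)))
    <= 16 * N * (p * (6 * k%:Z + 2 * N - a)) + 384 * N * x.
Proof.
move=> le2Na.
have : 0 <= x ^+ 2 * (6 * k%:Z - (a - 2 * N)) by apply: mulr_ge0; [exact: sqr_ge0 | lia].
have : 0 <= x * (a - k%:Z * x) by apply: mulr_ge0; lia.
have : 0 <= x * (6 * N - a) by apply: mulr_ge0; lia.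
have : 0 <= N * ((p - x) * (6 * k%:Z + 2 * N - a)).
  by apply: mulr_ge0; [lia | apply: mulr_ge0; lia].
have : 0 <= N * x ^+ 2 by apply: mulr_ge0; [lia | exact: sqr_ge0].
lia.
Qed.

Lemma step_cross : a < 2 * N -> 2 * N <= a + x ->
  8 * x ^+ 2 * a + 16 * N * (x * (6 * k.+1%:Z + 2 * N - (a + x)))
    <= 16 * N * (p * (6 * k%:Z)) + (8 * N ^+ 3 + 288 * N ^+ 2 - a ^+ 3) + 384 * N * x.
Proof.
move=> a_lt le2Nax.
have := cube_crossing N_ge2 k_ge2_int x_ge0 a_ge0 a_lt kx_le_a ax_le.
have : 0 <= N * (x * (a + x - 2 * N)) by apply: mulr_ge0; [lia | apply: mulr_ge0; lia].
have : 0 <= N * (k%:Z * (p - x)) by apply: mulr_ge0; [lia | apply: mulr_ge0; lia].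
have : 0 <= N * x by apply: mulr_ge0; lia.
lia.
Qed.

Lemma step_below : a + x < 2 * N ->
  8 * x ^+ 2 * a + 16 * N * (x * (6 * k.+1%:Z))
    <= 16 * N * (p * (6 * k%:Z)) + ((a + x) ^+ 3 - a ^+ 3) + 384 * N * x.
Proof.
move=> ax_lt.
have le2xa : 2 * x <= a by have := ler_wpM2r x_ge0 k_ge2_int; lia.
have := cube_increment x_ge0 le2xa.
have : 0 <= N * (k%:Z * (p - x)) by apply: mulr_ge0; [lia | apply: mulr_ge0; lia].
have : 0 <= N * x by apply: mulr_ge0; lia.
lia.
Qed.

Lemma potential_step (s : int) :
  8 * s + 16 * N * (p * slack N k a) <= phi N a + 384 * N * a ->
  8 * (s + x ^+ 2 * a) + 16 * N * (x * slack N k.+1 (a + x))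
    <= phi N (a + x) + 384 * N * (a + x).
Proof.
rewrite /phi /slack.
have [le2Na|a_lt] := leP (2 * N) a.
  have -> : 2 * N <= a + x by lia.
  by have := step_above le2Na; lia.
have [le2Nax|ax_lt] := leP (2 * N) (a + x).
  by have := step_cross a_lt le2Nax; lia.
by have := step_below ax_lt; lia.
Qed.

End PotentialStep.

Lemma potential_base (N u v : int) :
  0 <= N -> 0 <= v -> v <= u -> u + v <= 2 * N - 4 ->
  8 * (v ^+ 2 * u) + 16 * N * (v * slack N 2 (u + v)) <= phi N (u + v) + 384 * N * (u + v).
Proof.
move=> N_ge0 v_ge0 v_le_u uv_le; rewrite /phi /slack.
have -> : (2 * N <= u + v) = false by apply/negbTE; rewrite -ltNge; lia.
have : 0 <= (u - v) ^+ 2 * (u + 5 * v) by apply: mulr_ge0; [exact: sqr_ge0 | lia].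
have : 0 <= v ^+ 2 * (u - v) by apply: mulr_ge0; [exact: sqr_ge0 | lia].
have : 0 <= N * v by apply: mulr_ge0.
have : 0 <= N * u by apply: mulr_ge0; lia.
lia.
Qed.

(* At index n the potential inequality yields the bound on the weighted sum,
   since a_n <= 6n and the slack term is nonnegative. *)
Lemma potential_final (n : nat) (s a p : int) :
  0 <= p -> 0 <= a -> a <= 6 * n%:Z ->
  8 * s + 16 * n%:Z * (p * slack n n a) <= phi n a + 384 * n%:Z * a ->
  s <= n%:Z ^+ 3 + 324 * n%:Z ^+ 2.
Proof.
move=> p_ge0 a_ge0 a_le; rewrite /phi /slack; set N := n%:Z.
have N_ge0 : 0 <= N by [].
have budget : N * a <= N * (6 * N) by apply: ler_wpM2l.
have [le2Na|a_lt] := leP (2 * N) a.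
  have : 0 <= N * (p * (6 * N + 2 * N - a)) by apply: mulr_ge0 => //; apply: mulr_ge0; lia.
  lia.
have : 0 <= N * (p * (6 * N + 2 * N - 2 * N)) by apply: mulr_ge0 => //; apply: mulr_ge0; lia.
have : a ^+ 3 <= (2 * N) ^+ 3 by apply: lerXn2r; rewrite ?nnegrE; lia.
lia.
Qed.

Section PrefixSums.

Variable y : nat -> int.
Hypothesis y_ge0 : forall j, 0 <= y j.
Hypothesis y_noninc : forall i j, (i <= j)%N -> y j <= y i.

Definition prefix (k : nat) : int := \sum_(i < k) y i.

Definition weighted (k : nat) : int := \sum_(j < k) y j ^+ 2 * prefix j.

Lemma prefix0 : prefix 0 = 0.
Proof. by rewrite /prefix big_ord0. Qed.

Lemma prefixS k : prefix k.+1 = prefix k + y k.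
Proof. by rewrite /prefix big_ord_recr. Qed.

Lemma weightedS k : weighted k.+1 = weighted k + y k ^+ 2 * prefix k.
Proof. by rewrite /weighted big_ord_recr. Qed.

Lemma prefix_ge0 k : 0 <= prefix k.
Proof. by apply: sumr_ge0 => i _; exact: y_ge0. Qed.

Lemma prefix_mono k l : (k <= l)%N -> prefix k <= prefix l.
Proof.
move=> /subnKC <-; elim: (l - k)%N => [|m IH]; first by rewrite addn0.
by rewrite addnS prefixS; have := y_ge0 (k + m); lia.
Qed.

(* Each of the first k terms is at least y_j, so k y_j <= a_k for k <= j + 1. *)
Lemma prefix_lb k j : (k <= j.+1)%N -> k%:Z * y j <= prefix k.
Proof.
elim: k => [|k IH] le_kj; first by rewrite prefix0 mul0r.
rewrite prefixS intS; have := IH (ltnW le_kj); have := y_noninc (ltnSE le_kj).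
lia.
Qed.

Variable n : nat.
Hypothesis prefix_bound :
  forall k, (1 <= k <= n)%N -> prefix k <= 2 * n%:Z + 6 * k%:Z - 16.
Hypothesis total_bound : prefix n <= 6 * n%:Z - 12.

Lemma potential_invariant k : (2 <= k <= n)%N ->
  8 * weighted k + 16 * n%:Z * (y k.-1 * slack n k (prefix k))
    <= phi n (prefix k) + 384 * n%:Z * prefix k.
Proof.
case/andP=> le2k; rewrite -(subnKC le2k) add2n.
elim: (k - 2)%N => [|m IH] le_mn.
  have := prefix_bound (k := 2) le_mn.
  rewrite !weightedS !prefixS /weighted big_ord0 prefix0 !add0r mulr0 add0r /= => uv_le.
  by apply: potential_base => //; [exact: y_noninc | lia].
have le_mn' : (m.+2 <= n)%N by apply: ltnW.
have ax_le := prefix_bound (k := m.+3) le_mn; rewrite prefixS in ax_le.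
have ax_le_total := prefix_mono le_mn; rewrite prefixS in ax_le_total.
rewrite weightedS (prefixS m.+2) /=; apply: (potential_step (p := y m.+1)) => //.
- lia.
- exact: y_noninc.
- exact: prefix_lb.
- exact: (prefix_bound (k := m.+2) le_mn').
- lia.
- lia.
- exact: IH.
Qed.

Lemma weighted_bound : (2 <= n)%N -> weighted n <= n%:Z ^+ 3 + 324 * n%:Z ^+ 2.
Proof.
move=> le2n; apply: (potential_final (p := y n.-1) (a := prefix n)) => //.
- exact: prefix_ge0.
- lia.
- by apply: potential_invariant; rewrite le2n leqnn.
Qed.

End PrefixSums.

Section ZeroExtension.

Variables (n : nat) (x : 'I_n -> int).

Definition zext (j : nat) : int := if insub j is Some i then x i else 0.

Lemma zext_ord (i : 'I_n) : zext i = x i.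
Proof. by rewrite /zext valK. Qed.

Lemma zext_out j : (n <= j)%N -> zext j = 0.
Proof. by move=> le_nj; rewrite /zext insubF // ltnNge le_nj. Qed.

Lemma prefix_zext k : (k <= n)%N -> \sum_(i < n | (i < k)%N) x i = prefix zext k.
Proof.
move=> le_kn; rewrite /prefix.
under eq_bigr => i _ do rewrite -zext_ord.
rewrite -(subnKC le_kn) big_split_ord /= [X in _ + X]big_pred0; last first.
  by move=> i /=; rewrite ltnNge leq_addr.
by rewrite addr0; apply: eq_bigl => i /=; rewrite ltn_ord.
Qed.

(* Exchanging the double sum: S(x) = sum_j x_j^2 (x_0 + ... + x_(j-1)). *)
Lemma S_zext : S x = weighted zext n.
Proof.
rewrite /S /weighted.
under eq_bigr => i _ do rewrite big_mkcond /=.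
rewrite exchange_big /=; apply: eq_bigr => j _.
by rewrite -big_mkcond /= -mulr_suml prefix_zext 1?ltnW // zext_ord mulrC.
Qed.

Hypothesis x_ge0 : forall i, 0 <= x i.
Hypothesis x_noninc : forall i j : 'I_n, (i <= j)%N -> x j <= x i.

Lemma zext_ge0 j : 0 <= zext j.
Proof.
case: (ltnP j n) => [lt_jn | le_nj]; last by rewrite zext_out.
by rewrite -[j]/(val (Ordinal lt_jn)) zext_ord.
Qed.

Lemma zext_noninc i j : (i <= j)%N -> zext j <= zext i.
Proof.
move=> le_ij; case: (ltnP j n) => [lt_jn | le_nj]; last by rewrite zext_out ?zext_ge0.
have lt_in : (i < n)%N := leq_ltn_trans le_ij lt_jn.
rewrite -[j]/(val (Ordinal lt_jn)) -[i]/(val (Ordinal lt_in)) !zext_ord.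
exact: x_noninc.
Qed.

End ZeroExtension.

Theorem theorem5 :
  exists C : rat, forall (n : nat) (x : 'I_n -> int),
    (2 <= n)%N -> in_A x ->
    (S x)%:~R <= (n%:R ^+ 3 + C * n%:R ^+ 2 : rat).
Proof.
exists 324%:R => n x le2n [_ [x_noninc [x_ge0 [prefix_le total_le]]]].
have bound : S x <= n%:Z ^+ 3 + 324 * n%:Z ^+ 2.
  rewrite S_zext; apply: weighted_bound => //.
  - exact: zext_ge0.
  - exact: zext_noninc.
  - by move=> k /andP[le1k le_kn]; rewrite -prefix_zext //; apply: prefix_le; rewrite le1k.
  - rewrite -prefix_zext // (eq_bigl xpredT) // => i; exact: ltn_ord.
have : (S x)%:~R <= (n%:Z ^+ 3 + 324 * n%:Z ^+ 2)%:~R :> rat by rewrite ler_int.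
by rewrite rmorphD rmorphM !rmorphXn.
Qed.
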